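(* There is an absolute constant $D>0$ such that for every prime power $q$, every positive integer $n$, and every $A\in\Lambda(n,\mathbb{F}_q)$ with $\mathrm{rank}(A)>\frac23 n$, the number of isotropic spaces of $A$ (subspaces $U\le\mathbb{F}_q^n$ with $u^tAu'=0$ for all $u,u'\in U$) is at most $q^{\frac16 n^2+Dn}$.
   Context: $\Lambda(n,\mathbb{F}_q)$ is the space of $n\times n$ alternating matrices over $\mathbb{F}_q$. *)

From HB Require Import structures.
From mathcomp Require Import all_boot all_order all_algebra all_field.
Set Implicit Arguments. Unset Strict Implicit. Unset Printing Implicit Defensive.
Import GRing.Theory.
Local Open Scope ring_scope.

Definition alternating (F : fieldType) (n : nat) (A : 'M[F]_n) : bool :=
  [forall i, A i i == 0] && (A^T == - A).

Definition is_subspace (F : finFieldType) (n : nat) (U : {set 'rV[F]_n}) : bool :=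
  (0 \in U) && [forall u in U, forall v in U, forall a : F, (a *: u + v) \in U].

(* U is isotropic for A: u^t A u' = 0 for all u, u' in U (row-vector convention). *)
Definition isotropic (F : finFieldType) (n : nat) (A : 'M[F]_n)
    (U : {set 'rV[F]_n}) : bool :=
  [forall u in U, forall v in U, u *m A *m v^T == 0].

Definition num_isotropic (F : finFieldType) (n : nat) (A : 'M[F]_n) : nat :=
  #|[set U : {set 'rV[F]_n} | is_subspace U && isotropic A U]|.

From HB Require Import structures.
From mathcomp Require Import all_boot all_order all_algebra all_field.
From mathcomp Require Import zify.
Set Implicit Arguments. Unset Strict Implicit. Unset Printing Implicit Defensive.
Import GRing.Theory.
Local Open Scope ring_scope.

(* Let A be alternating of rank r on F^n, q = |F|, and d = n - r = dim ker A.
   An isotropic subspace U has a type (s, j): s = dim (U meet ker A) and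
   dim U = s + j.  It has an adapted basis (X, Y): the s rows of X span
   U meet ker A, and the j rows of Y complete them, with Y A of full rank j
   (we call such Y a j-frame).  The block lower-triangular group
   [g1 0; g2 g3] (g1 in GL_s, g3 in GL_j) acts freely on adapted bases of U,
   and adapted bases of different subspaces are different, so
     #(type (s, j)) * |GL_s| q^(js) |GL_j| <= #{X | X A = 0} * #{j-frames}
                                           <= q^(sd) q^(n + (n-1) + ... + (n-j+1)).
   Using |GL_m| >= q^(m(m-1)) and 3d < n, an elementary optimisation bounds
   the resulting exponent by (n^2 + 12n)/6; summing over the (n + 1)^2 types
   costs a factor q^(2n), which gives the theorem with D = 4. *)

Section MatrixCounting.
Variable F : finFieldType.
Local Notation q := #|F|.

Lemma card_field_gt1 : (1 < q)%N.
Proof. by rewrite (cardD1 0) (cardD1 1) !inE oner_eq0. Qed.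

(* An s x n matrix with rows in the row space of K is W *m row_base K for a
   unique W, so there are q ^ (s * rank K) of them. *)
Lemma card_submx s m n (K : 'M[F]_(m, n)) :
  #|[set X : 'M[F]_(s, n) | (X <= K)%MS]| = (q ^ (s * \rank K))%N.
Proof.
have -> : [set X : 'M[F]_(s, n) | (X <= K)%MS] =
    (fun W : 'M_(s, \rank K) => W *m row_base K) @: setT.
  apply/setP => X; rewrite inE; apply/idP/imsetP.
  - by rewrite -(eq_row_base K) => /submxP [W ->]; exists W.
  - by case=> W _ ->; rewrite -(eq_row_base K) submxMl.
rewrite card_in_imset ?cardsT ?card_mx // => W1 W2 _ _.
exact: (row_free_inj (row_base_free K)).
Qed.

Lemma card_kermx s n p (B : 'M[F]_(n, p)) :
  #|[set X : 'M[F]_(s, n) | X *m B == 0]| = (q ^ (s * (n - \rank B)))%N.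
Proof.
rewrite -mxrank_ker -card_submx; apply: eq_card => X.
by rewrite !inE sub_kermx.
Qed.

(* q ^ C(m, 2) <= (q - 1)(q^2 - 1)...(q^m - 1): each factor q^i - 1 >= q^(i-1). *)
Lemma prod_expn_pred_ge m :
  (q ^ 'C(m, 2) <= \prod_(1 <= i < m.+1) (q ^ i - 1))%N.
Proof.
elim: m => [|m IH]; first by rewrite big_geq.
rewrite big_nat_recr //= binS bin1 expnD leq_mul //.
rewrite expnS; have := card_field_gt1; move: q => Q Q_gt1.
have : (0 < Q ^ m)%N by rewrite expn_gt0; lia.
nia.
Qed.

(* A crude lower bound on the order of GL_m(F):
   |GL_m| = q^C(m,2) (q - 1)...(q^m - 1) >= q^(m(m-1)). *)
Lemma card_unitmx_ge m :
  (q ^ (m * m.-1) <= #|[set g : 'M[F]_m | g \in unitmx]|)%N.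
Proof.
case: m => [|m].
  by rewrite card_gt0; apply/set0Pn; exists 1%:M; rewrite inE unitmx1.
rewrite (eq_card (B := [pred g : 'M[F]_m.+1 | g \is a GRing.unit]));
  last by move=> g; rewrite inE.
have := card_GL F (ltn0Sn m); rewrite cardsT /= card_sub => ->.
have -> : (m.+1 * m.+1.-1 = 'C(m.+1, 2) + 'C(m.+1, 2))%N.
  by rewrite bin2 addnn halfK oddM /= andNb subn0.
by rewrite expnD leq_mul // prod_expn_pred_ge.
Qed.

End MatrixCounting.

Lemma card_dep_pairs (T1 T2 : finType) (P : pred T1) (Q : T1 -> pred T2) :
  #|[set p : T1 * T2 | P p.1 && Q p.1 p.2]| = (\sum_(a | P a) #|[set b | Q a b]|)%N.
Proof.
rewrite -sum1_card.
transitivity (\sum_(p | P p.1 && Q p.1 p.2) 1)%N.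
  by apply: eq_bigl => p; rewrite inE.
rewrite -(pair_big_dep P Q (fun _ _ => 1%N)); apply: eq_bigr => a _.
by rewrite -sum1_card; apply: eq_bigl => b; rewrite inE.
Qed.

Lemma mxrank_col_mx_le (K : fieldType) m1 m2 n (X : 'M[K]_(m1, n)) (Y : 'M_(m2, n)) :
  (\rank (col_mx X Y) <= \rank X + \rank Y)%N.
Proof. by rewrite -(addsmxE X Y); case: (mxrank_adds_leqif X Y). Qed.

Lemma unitmx_eqmx (K : fieldType) m p (g : 'M[K]_m) (B : 'M_(m, p)) :
  g \in unitmx -> (g *m B :=: B)%MS.
Proof. by move=> g_unit; apply: eqmxMfull; rewrite row_full_unit. Qed.

Section AlternatingForm.
Variables (F : finFieldType) (n : nat) (A : 'M[F]_n).
Hypothesis skewA : A^T = - A.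
Local Notation q := #|F|.

(* The form (x, y) |-> x A y^T is skew, so a matrix X in the left kernel of A
   is orthogonal to everything. *)
Lemma radical_orthogonal s j (X : 'M[F]_(s, n)) (Y : 'M[F]_(j, n)) :
  X *m A = 0 -> Y *m A *m X^T = 0.
Proof.
move=> XA0; apply: trmx_inj; rewrite trmx0 !trmx_mul trmxK skewA.
by rewrite mulNmx mulmxN mulmxA XA0 mul0mx oppr0.
Qed.

(* A j-frame: j vectors spanning an isotropic space on which u |-> u A is
   injective, i.e. an isotropic space meeting the radical ker A trivially. *)
Definition isoframe j (Y : 'M[F]_(j, n)) : bool :=
  (Y *m A *m Y^T == 0) && (\rank (Y *m A) == j).

Lemma isoframe_col_mx j (u : 'rV[F]_n) (D : 'M[F]_(j, n)) :
  isoframe (col_mx u D) -> isoframe D && (u *m (A *m D^T) == 0).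
Proof.
rewrite /isoframe mul_col_mx tr_col_mx mul_col_row -block_mx0.
case/andP=> /eqP/eq_block_mx [_ uAD0 _ DAD0] /eqP rank_uD.
rewrite DAD0 mulmxA uAD0 !eqxx andbT /= eqn_leq rank_leq_row -(leq_add2l 1).
rewrite -[X in (X <= _)%N]rank_uD (leq_trans (mxrank_col_mx_le _ _)) //.
by rewrite leq_add2r rank_leq_row.
Qed.

(* There are at most q^(n + (n-1) + ... + (n-j+1)) j-frames: the first vector
   must lie in the kernel of A D^T, a space of dimension n - j. *)
Lemma card_isoframe j :
  (#|[set Y : 'M[F]_(j, n) | isoframe Y]| <= q ^ (\sum_(i < j) (n - i)))%N.
Proof.
elim: j => [|j IH].
  by rewrite big_ord0 (leq_trans (max_card _)) // card_mx.
pose split_top (Y : 'M[F]_(1 + j, n)) := (dsubmx Y, usubmx Y).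
have split_inj : injective split_top.
  by move=> Y1 Y2 [e1 e2]; rewrite -(vsubmxK Y1) -(vsubmxK Y2) e1 e2.
rewrite -(card_imset _ split_inj).
pose Q (D : 'M[F]_(j, n)) (u : 'rV[F]_n) := u *m (A *m D^T) == 0.
apply: (@leq_trans #|[set p | isoframe p.1 && Q p.1 p.2]|).
  apply/subset_leq_card/subsetP => p /imsetP [Y + ->]; rewrite !inE => frameY.
  by apply: isoframe_col_mx; rewrite vsubmxK.
rewrite (card_dep_pairs (@isoframe j) Q) big_ord_recr /= expnD.
apply: (@leq_trans (\sum_(D | isoframe D) q ^ (n - j))%N).
  apply: leq_sum => D /andP [_ /eqP rankDA]; rewrite card_kermx mul1n.
  by rewrite -mxrank_tr trmx_mul trmxK skewA mulmxN mxrank_opp rankDA.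
by rewrite sum_nat_const leq_mul2r -cardsE IH orbT.
Qed.

Lemma form_mx_entry m1 m2 (X : 'M[F]_(m1, n)) (Y : 'M[F]_(m2, n)) i l :
  (X *m A *m Y^T) i l = (row i X *m A *m (row l Y)^T) 0 0.
Proof.
rewrite !mxE; apply: eq_bigr => k _; rewrite !mxE; congr (_ * _).
by apply: eq_bigr => t _; rewrite !mxE.
Qed.

Definition rowspace_set m (M : 'M[F]_(m, n)) : {set 'rV[F]_n} := [set v | (v <= M)%MS].

(* Every isotropic subspace is the row space of a matrix M with M A M^T = 0:
   take for M the matrix listing all elements of U (0 for the others). *)
Lemma isotropic_subspace_mx (U : {set 'rV[F]_n}) : is_subspace U -> isotropic A U ->
  exists m (M : 'M[F]_(m, n)), rowspace_set M = U /\ M *m A *m M^T = 0.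
Proof.
case/andP=> U0 /forallP U_lin isoU.
have U_comb a u v : u \in U -> v \in U -> a *: u + v \in U.
  by move=> uU vU; move: (U_lin u); rewrite uU => /forallP/(_ v)/implyP/(_ vU)/forallP.
pose keep_in_U (v : 'rV[F]_n) := if v \in U then v else 0.
pose M := \matrix_(i < #|{: 'rV[F]_n}|) keep_in_U (enum_val i).
have rowM i : row i M \in U by rewrite rowK /keep_in_U; case: ifP.
exists _, M; split.
  apply/setP => v; rewrite inE; apply/idP/idP.
    case/submxP => W ->; rewrite mulmx_sum_row.
    elim/big_ind: _ => [//|x y xU yU|i _].
      by rewrite -[x]scale1r U_comb.
    by rewrite -[_ *: _]addr0 U_comb.
  move=> vU; have -> : v = row (enum_rank v) M.
    by rewrite rowK enum_rankK /keep_in_U vU.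
  exact: row_sub.
apply/matrixP => i l; rewrite form_mx_entry [RHS]mxE.
move: isoU => /forallP/(_ (row i M))/implyP/(_ (rowM i)).
by move=> /forallP/(_ (row l M))/implyP/(_ (rowM l))/eqP ->; rewrite mxE.
Qed.

Definition adapted_basis s j (U : {set 'rV[F]_n}) (p : 'M[F]_(s, n) * 'M[F]_(j, n)) :=
  [&& p.1 *m A == 0, isoframe p.2, row_free (col_mx p.1 p.2)
    & U == rowspace_set (col_mx p.1 p.2)].

(* Isotropic subspaces of type (s, j): dim (U meet ker A) = s, dim U = s + j. *)
Definition isotype s j : {set {set 'rV[F]_n}} :=
  [set U | [exists p : 'M[F]_(s, n) * 'M[F]_(j, n), adapted_basis U p]].

(* Every isotropic subspace has a type: split the row space of M into its
   intersection C with ker A and a complement D, which is then a frame. *)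
Lemma isotype_exists (U : {set 'rV[F]_n}) : is_subspace U -> isotropic A U ->
  exists s j, U \in isotype s j.
Proof.
move=> subU isoU; have [m [M [spanM isoM]]] := isotropic_subspace_mx subU isoU.
set C := (M :&: kermx A)%MS; set D := (M :\: kermx A)%MS.
exists (\rank C), (\rank D); rewrite inE; apply/existsP.
exists (row_base C, row_base D); rewrite /adapted_basis /=.
have D_rad0 : (D :&: kermx A)%MS = 0 by apply: capmx_diff.
have eqM : (col_mx (row_base C) (row_base D) :=: M)%MS.
  apply: eqmx_trans (eqmx_sym (addsmxE _ _)) _.
  apply: eqmx_trans (adds_eqmx (eq_row_base C) (eq_row_base D)) _.
  by rewrite addsmxC; apply: addsmx_diff_cap_eq.
apply/and4P; split.
- by rewrite -sub_kermx eq_row_base capmxSr.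
- apply/andP; split.
    have /submxP [W ->] : (row_base D <= M)%MS by rewrite eq_row_base diffmxSl.
    by rewrite trmx_mul !mulmxA -(mulmxA W) -(mulmxA W) isoM mulmx0 mul0mx.
  apply/eqP; apply: etrans (_ : _ = \rank (row_base D)) _; last by rewrite eq_row_base.
  apply/mxrank_injP.
  by rewrite -submx0 -D_rad0 capmxS ?eq_row_base.
- by rewrite /row_free eqM -(mxrank_cap_compl M (kermx A)).
- by rewrite -spanM; apply/eqP/setP => v; rewrite !inE eqM.
Qed.

Lemma isotype_dims s j U : U \in isotype s j -> (s <= n - \rank A)%N && (j <= n)%N.
Proof.
rewrite inE => /existsP [[X Y] /and4P [/eqP XA0 /andP [_ /eqP rankYA] free_XY _]].
rewrite -rankYA rank_leq_col andbT -mxrank_ker.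
have /leq_trans -> // : (s <= \rank X)%N.
  rewrite -(leq_add2r j); move/eqP: free_XY => <-.
  by rewrite (leq_trans (mxrank_col_mx_le X Y)) // leq_add2l rank_leq_row.
by rewrite mxrankS // sub_kermx XA0.
Qed.

Lemma adapted_basis_transform s j U (X : 'M[F]_(s, n)) (Y : 'M[F]_(j, n))
    (g1 : 'M[F]_s) (g2 : 'M[F]_(j, s)) (g3 : 'M[F]_j) :
  g1 \in unitmx -> g3 \in unitmx -> adapted_basis U (X, Y) ->
  adapted_basis U (g1 *m X, g2 *m X + g3 *m Y).
Proof.
move=> g1_unit g3_unit /and4P [/eqP XA0 /andP [/eqP isoY /eqP rankYA] free_XY /eqP ->].
rewrite /adapted_basis /=.
have YA : (g2 *m X + g3 *m Y) *m A = g3 *m (Y *m A).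
  by rewrite mulmxDl -!mulmxA XA0 mulmx0 add0r.
have -> : col_mx (g1 *m X) (g2 *m X + g3 *m Y) = block_mx g1 0 g2 g3 *m col_mx X Y.
  by rewrite mul_block_col mul0mx addr0.
have g_unit : block_mx g1 0 g2 g3 \in unitmx.
  by rewrite unitmxE det_lblock unitrM -!unitmxE g1_unit g3_unit.
apply/and4P; split.
- by rewrite -mulmxA XA0 mulmx0.
- rewrite /isoframe YA (unitmx_eqmx _ g3_unit) rankYA eqxx andbT.
  rewrite linearD /= mulmxDr !trmx_mul !mulmxA -!(mulmxA g3).
  by rewrite (radical_orthogonal Y XA0) isoY !mul0mx !mulmx0 addr0.
- by rewrite /row_free (unitmx_eqmx _ g_unit).
- by apply/eqP/setP => v; rewrite !inE (unitmx_eqmx _ g_unit).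
Qed.

Lemma transform_inj s j (X : 'M[F]_(s, n)) (Y : 'M[F]_(j, n))
    (g1 g1' : 'M[F]_s) (g2 g2' : 'M[F]_(j, s)) (g3 g3' : 'M[F]_j) :
  row_free (col_mx X Y) ->
  g1 *m X = g1' *m X -> g2 *m X + g3 *m Y = g2' *m X + g3' *m Y ->
  [/\ g1 = g1', g2 = g2' & g3 = g3'].
Proof.
move=> free_XY e1 e2.
have /eq_row_mx [-> _] : row_mx g1 (0 : 'M_(s, j)) = row_mx g1' 0.
  by apply: (row_free_inj free_XY); rewrite /= !mul_row_col !mul0mx !addr0.
have /eq_row_mx [-> ->] : row_mx g2 g3 = row_mx g2' g3'.
  by apply: (row_free_inj free_XY); rewrite /= !mul_row_col.
by [].
Qed.

(* Orbit counting: fixing one adapted basis per subspace of type (s, j), the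
   map (U, g1, g2, g3) |-> transformed basis is injective into the pairs
   (X, Y) with X A = 0 and Y a j-frame. *)
Lemma card_isotype s j :
  (#|isotype s j| * q ^ (s * s.-1) * q ^ (j * s) * q ^ (j * j.-1) <=
     q ^ (s * (n - \rank A)) * q ^ (\sum_(i < j) (n - i)))%N.
Proof.
pose basis U := odflt (0, 0) [pick p : 'M[F]_(s, n) * 'M[F]_(j, n) | adapted_basis U p].
have basisP U : U \in isotype s j -> adapted_basis U (basis U).
  rewrite inE => /existsP [p adapted_p]; rewrite /basis.
  by case: pickP => [p' -> // | /(_ p)]; rewrite adapted_p.
pose units m := [set g : 'M[F]_m | g \in unitmx].
pose Dom := setX (setX (setX (isotype s j) (units s)) [set: 'M[F]_(j, s)]) (units j).
pose act (x : {set 'rV[F]_n} * 'M[F]_s * 'M[F]_(j, s) * 'M[F]_j) :=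
  let: (U, g1, g2, g3) := x in
  (g1 *m (basis U).1, g2 *m (basis U).1 + g3 *m (basis U).2).
have act_adapted x : x \in Dom -> adapted_basis x.1.1.1 (act x).
  case: x => [[[U g1] g2] g3]; rewrite !in_setX /=.
  move=> /andP [/andP [/andP [U_type g1u] _] g3u]; rewrite !inE in g1u g3u.
  by move: (basisP U U_type); case: (basis U) => X Y; apply: adapted_basis_transform.
have act_inj : {in Dom &, injective act}.
  move=> x x' x_Dom x'_Dom e.
  have same_U : x.1.1.1 = x'.1.1.1.
    move: (act_adapted x x_Dom) (act_adapted x' x'_Dom); rewrite e.
    by move=> /and4P [_ _ _ /eqP ->] /and4P [_ _ _ /eqP ->].
  case: x x' x_Dom {x'_Dom} e same_U => [[[U g1] g2] g3] [[[U' g1'] g2'] g3'] /=.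
  rewrite !in_setX => /andP [/andP [/andP [U_type _] _] _] + same_U.
  rewrite -{}same_U; move: (basisP U U_type); case: (basis U) => X Y.
  move=> /and4P [_ _ free_XY _] /= [e1 e2].
  by case: (transform_inj free_XY e1 e2) => -> -> ->.
apply: (@leq_trans #|Dom|).
  by rewrite !cardsX cardsT card_mx !leq_mul ?card_unitmx_ge.
rewrite -(card_in_imset act_inj) -!card_kermx.
apply: (@leq_trans #|setX [set X : 'M[F]_(s, n) | X *m A == 0] [set Y | isoframe Y]|).
  apply/subset_leq_card/subsetP => p /imsetP [x /act_adapted + ->].
  by case: (act x) => X Y /and4P [XA0 frameY _ _]; rewrite !inE XA0 frameY.
by rewrite cardsX leq_mul ?card_isoframe // card_kermx.
Qed.

End AlternatingForm.

Lemma double_sum_desc n j :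
  (j <= n)%N -> (2 * \sum_(i < j) (n - i) + j * (j - 1) = 2 * j * n)%N.
Proof.
elim: j => [|j IH] le_jn; first by rewrite big_ord0.
rewrite big_ord_recr /= mulnDr; have := IH (ltnW le_jn).
move: (\sum_(i < j) (n - i))%N => Sj; nia.
Qed.

(* (n - s - 3j)^2 >= 0, expanded over the naturals. *)
Lemma square_expansion_ge n s j :
  (2 * n * s + 6 * n * j <= n * n + s * s + 9 * j * j + 6 * s * j)%N.
Proof.
have := BinInt.Z.square_nonneg (BinInt.Z.sub
  (BinInt.Z.sub (BinInt.Z.of_nat n) (BinInt.Z.of_nat s))
  (BinInt.Z.of_nat (3 * j))).
lia.
Qed.

Lemma exponent_bound n d s j :
  (3 * d < n)%N -> (s <= d)%N -> (j <= n)%N ->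
  (6 * (s * d + \sum_(i < j) (n - i)) <=
     n * n + 12 * n + 6 * (s * s.-1 + j * s + j * j.-1))%N.
Proof.
move=> lt_3d_n le_sd le_jn.
have := double_sum_desc le_jn; move: (\sum_(i < j) (n - i))%N => Sj sum_eq.
have := square_expansion_ge n s j.
have sd_le : (3 * (s * d) <= s * n)%N by rewrite mulnCA leq_mul2l ltnW ?orbT.
case: s le_sd sd_le => [|s]; case: j le_jn sum_eq => [|j] /=; lia.
Qed.

Lemma card_isotype_le (F : finFieldType) n (A : 'M[F]_n) (skewA : A^T = - A) s j :
  (2 * n < 3 * \rank A)%N -> (#|isotype A s j| <= #|F| ^ ((n * n + 12 * n) %/ 6))%N.
Proof.
move=> rank_gt.
have [-> | [U U_type]] := set_0Vmem (isotype A s j); first by rewrite cards0.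
have /andP [le_s le_j] := isotype_dims U_type.
have := card_isotype skewA s j; rewrite -!mulnA -!expnD.
set a := (s * s.-1 + (j * s + j * j.-1))%N; set b := (_ + _)%N => card_le.
have q_gt1 := card_field_gt1 F.
have q_a_gt0 : (0 < #|F| ^ a)%N by rewrite expn_gt0 ltnW.
have le_ab : (a <= b)%N.
  rewrite -(leq_exp2l _ _ q_gt1) (leq_trans _ card_le) // leq_pmull // card_gt0.
  by apply/set0Pn; exists U.
apply: (@leq_trans (#|F| ^ (b - a))).
  by rewrite -(leq_pmul2r q_a_gt0) -expnD subnK.
have lt_3d_n : (3 * (n - \rank A) < n)%N by have := rank_leq_col A; lia.
rewrite leq_exp2l // leq_divRL //.
by have := exponent_bound lt_3d_n le_s le_j; rewrite /a /b; lia.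
Qed.

Lemma card_bigcup_le (I T : finType) (P : pred I) (G : I -> {set T}) :
  (#|\bigcup_(i | P i) G i| <= \sum_(i | P i) #|G i|)%N.
Proof.
elim/big_rec2: _ => [|i m B _ IH]; first by rewrite cards0.
by case: (leq_card_setU (G i) B) => le_U _; rewrite (leq_trans le_U) ?leq_add2l.
Qed.

Lemma num_isotropic_le (F : finFieldType) n (A : 'M[F]_n) :
  alternating A -> (2 * n < 3 * \rank A)%N ->
  (num_isotropic A <= #|F| ^ ((n * n + 12 * n) %/ 6 + 2 * n))%N.
Proof.
case/andP=> _ /eqP skewA rank_gt.
set E := ((n * n + 12 * n) %/ 6)%N.
have cover : [set U | is_subspace U && isotropic A U] \subset
    \bigcup_(t : 'I_n.+1 * 'I_n.+1) isotype A t.1 t.2.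
  apply/subsetP => U; rewrite inE => /andP [subU isoU].
  have [s [j U_type]] := isotype_exists subU isoU.
  have /andP [le_s le_j] := isotype_dims U_type.
  apply/bigcupP; exists (inord s, inord j) => //=.
  by rewrite !inordK ?ltnS // (leq_trans le_s) ?leq_subr.
apply: leq_trans (subset_leq_card cover) _.
apply: leq_trans (card_bigcup_le _ _) _.
apply: (@leq_trans (\sum_(t : 'I_n.+1 * 'I_n.+1) #|F| ^ E)).
  by apply: leq_sum => t _; apply: card_isotype_le.
rewrite sum_nat_const card_prod card_ord expnD mulnC leq_mul //.
have n_lt_q := ltn_expl n (card_field_gt1 F).
by rewrite mul2n -addnn expnD leq_mul.
Qed.

(* Stdlib Reals is imported only now, as it rebinds ^ in nat_scope. *)
From Stdlib Require Import Reals Lra.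
Local Close Scope ring_scope.

Lemma INR_expn a k : INR (expn a k) = (INR a ^ k)%R.
Proof.
elim: k => [|k IH]; first by rewrite expn0.
by rewrite expnS -multE mult_INR IH.
Qed.

(* With D = 4: the natural exponent (n^2 + 12n) / 6 + 2n is at most n^2/6 + 4n. *)
Theorem lemma7p6 :
  exists D : R, (0 < D)%R /\
    forall (F : finFieldType) (n : nat) (A : 'M[F]_n),
      (0 < n)%N -> alternating A -> (2 * n < 3 * \rank A)%N ->
      (INR (num_isotropic A) <=
         Rpower (INR #|F|) (INR n ^ 2 / 6 + D * INR n))%R.
Proof.
exists 4%R; split; first lra.
move=> F n A _ altA rank_gt.
set E := ((n * n + 12 * n) %/ 6)%N.
have q_ge1 : (1 <= INR #|F|)%R by apply: (le_INR 1); apply/leP/ltnW/card_field_gt1.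
have INR6 : INR 6 = 6%R by rewrite INR_IZR_INZ.
have INR12 : INR 12 = 12%R by rewrite INR_IZR_INZ.
have E_le : (INR E * 6 <= INR n * (INR n + 12))%R.
  have E_le_nat : (E * 6 <= n * (n + 12))%N by rewrite mulnDr [n * 12]mulnC leq_divM.
  have := le_INR _ _ (elimT leP E_le_nat).
  by rewrite -!multE -plusE !mult_INR plus_INR INR6 INR12.
apply: Rle_trans (_ : INR (num_isotropic A) <= INR (expn #|F| (E + 2 * n)))%R _.
  exact/le_INR/leP/num_isotropic_le.
rewrite INR_expn -Rpower_pow; last lra.
apply: Rle_Rpower => //.
rewrite -plusE -multE plus_INR mult_INR /=; lra.
Qed.
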